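(* (Explicit Rayleigh's Cutting Law.) Let $\Gamma$ be a metrized graph and let $e_i$ be an edge of $\Gamma$ with end points $p_i,q_i$ and length $L_i$. If $e_i$ is not a bridge of $\Gamma$, then for any $s,t\in\Gamma-e_i$, $$r(s,t)=r_{\Gamma-e_i}(s,t)-\frac{1}{L_i+R_i}\big(j^{\Gamma-e_i}_{p_i}(q_i,s)-j^{\Gamma-e_i}_{p_i}(q_i,t)\big)^2=r_{\Gamma-e_i}(s,t)-\frac{L_i+R_i}{L_i^2}\big(j_{p_i}(q_i,s)-j_{p_i}(q_i,t)\big)^2.$$ In particular $r_{\Gamma-e_i}(s,t)\ge r(s,t)$, and equality holds if and only if $j_{p_i}(q_i,s)=j_{p_i}(q_i,t)$.
   Context: A metrized graph $\Gamma$ is a finite connected graph (multiple edges and self-loops allowed) in which each edge is identified with a closed line segment of positive length. $\Gamma$ is regarded as a resistive electric circuit in which each edge is a resistor whose resistance equals its length. $r(x,y)$ is the effective resistance between $x$ and $y$; $j_z(x,y)$ is the voltage at $x$ when a unit current enters at $y$ and exits at $z$, with reference voltage $0$ at $z$. $\Gamma-e_i$ denotes the metrized graph obtained from $\Gamma$ by deleting the interior of the edge $e_i$; $e_i$ is a bridge if $\Gamma-e_i$ is disconnected. When $e_i$ is not a bridge, $R_i:=r_{\Gamma-e_i}(p_i,q_i)$. Subscripts/superscripts $\Gamma-e_i$ indicate resistance and voltage functions on $\Gamma-e_i$. *)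

(* finite multigraph models of metrized graphs, electrical
   network quantities defined via the discrete Kirchhoff equations. *)
From HB Require Import structures.
From mathcomp Require Import all_boot all_order all_algebra.
From Stdlib Require Import ClassicalEpsilon.
Set Implicit Arguments. Unset Strict Implicit. Unset Printing Implicit Defensive.
Import Order.TTheory GRing.Theory Num.Theory.
Local Open Scope ring_scope.

Section MetrizedGraph.
Variables (R : realFieldType) (V E : finType).
Variables (pe qe : E -> V) (len : E -> R).

Definition adjS (S : {set E}) : rel V :=
  fun x y => [exists e in S, ((pe e == x) && (qe e == y)) || ((pe e == y) && (qe e == x))].

Definition connectedS (S : {set E}) : Prop := forall x y : V, connect (adjS S) x y.

Definition is_bridge (S : {set E}) (e : E) : Prop := ~ connectedS (S :\ e).

(* net current flowing out of vertex v into the edges of S under potential phi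
   (the current through a resistor of resistance len e is the voltage drop
   divided by len e; self-loops carry no current) *)
Definition outflow (S : {set E}) (phi : V -> R) (v : V) : R :=
  \sum_(e in S) ((pe e == v)%:R * (phi (pe e) - phi (qe e)) / len e
                 + (qe e == v)%:R * (phi (qe e) - phi (pe e)) / len e).

(* phi is the potential when a unit current enters at y and exits at z,
   with reference voltage 0 at z *)
Definition is_voltage (S : {set E}) (z y : V) (phi : V -> R) : Prop :=
  phi z = 0 /\ forall v, outflow S phi v = (v == y)%:R - (v == z)%:R.

(* j_z(x,y) on the graph with edge set S *)
Definition jS (S : {set E}) (z x y : V) : R :=
  epsilon (inhabits (fun _ => 0)) (is_voltage S z y) x.

Definition rS (S : {set E}) (x y : V) : R := jS S y x x.

End MetrizedGraph.

From HB Require Import structures.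
From mathcomp Require Import all_boot all_order all_algebra.
From mathcomp Require Import ring lra.
From Stdlib Require Import ClassicalEpsilon.
Set Implicit Arguments. Unset Strict Implicit. Unset Printing Implicit Defensive.
Import Order.TTheory GRing.Theory Num.Theory.
Local Open Scope ring_scope.

(* By Green's identity, the potential phi of a unit current from y to z represents the
   functional f |-> f y - f z for the Dirichlet form [energy S].  The Dirichlet forms of
   Γ and Γ - e_i differ only by the term of e_i, so testing the potentials of the two
   current problems q_i -> p_i and s -> t on both graphs against each other gives two
   linear relations between X = j'(s) - j'(t), Y = j(s) - j(t) and the resistances:
   (L_i + R_i) Y = L_i X  and  r'(s,t) = r(s,t) + X Y / L_i.  Eliminating X or Y yields
   the two forms of the cutting law. *)

Section KernelSurjective.
Variables (F : fieldType) (V : finType).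

Lemma sum_kernel_surj (M : V -> V -> F) :
    (forall phi : V -> F, (forall v, \sum_u phi u * M u v = 0) -> forall u, phi u = 0) ->
  forall rho : V -> F, exists phi : V -> F, forall v, \sum_u phi u * M u v = rho v.
Proof.
move=> inj rho.
pose A : 'M[F]_#|V| := \matrix_(i, j) M (enum_val i) (enum_val j).
have mulA (w : 'rV_#|V|) v :
    (w *m A) 0 (enum_rank v) = \sum_u w 0 (enum_rank u) * M u v.
  rewrite mxE [RHS](big_enum_val (A := predT)) /=.
  by apply: eq_bigr => i _; rewrite enum_valK mxE enum_rankK.
have Aunit : A \in unitmx.
  rewrite -row_free_unit; apply: inj_row_free => x xA0; apply/rowP => i.
  rewrite -[i]enum_valK mxE; apply: (inj (fun u => x 0 (enum_rank u))) => v.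
  by rewrite -mulA xA0 mxE.
pose w := \row_i rho (enum_val i) *m invmx A.
exists (fun v => w 0 (enum_rank v)) => v.
by rewrite -mulA mulmxKV // mxE enum_rankK.
Qed.

End KernelSurjective.

Section Network.
Variables (R : realFieldType) (V E : finType).
Variables (pe qe : E -> V) (len : E -> R).
Hypothesis len_pos : forall e, 0 < len e.

Definition dipole (y z v : V) : R := (v == y)%:R - (v == z)%:R.

Definition vdrop (phi : V -> R) (e : E) : R := phi (pe e) - phi (qe e).

Definition energy (S : {set E}) (f g : V -> R) : R :=
  \sum_(e in S) vdrop f e * vdrop g e / len e.

Definition laplacian (S : {set E}) (u v : V) : R :=
  \sum_(e in S) dipole (pe e) (qe e) u * dipole (pe e) (qe e) v / len e.

Lemma sum_mul_eq (f : V -> R) x : \sum_v f v * (v == x)%:R = f x.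
Proof.
under eq_bigr do rewrite mulr_natr mulrb.
by rewrite -big_mkcond big_pred1_eq.
Qed.

Lemma sum_mul_dipole (f : V -> R) y z : \sum_v f v * dipole y z v = f y - f z.
Proof.
by under eq_bigr do rewrite mulrBr; rewrite sumrB !sum_mul_eq.
Qed.

Lemma vdropE f e : vdrop f e = \sum_v f v * dipole (pe e) (qe e) v.
Proof. by rewrite sum_mul_dipole. Qed.

Lemma sum_dipole y z : \sum_v dipole y z v = 0.
Proof.
under eq_bigr do rewrite -[dipole _ _ _]mul1r.
by rewrite sum_mul_dipole subrr.
Qed.

Lemma outflowE S phi v :
  outflow pe qe len S phi v = \sum_(e in S) dipole (pe e) (qe e) v * vdrop phi e / len e.
Proof. by apply: eq_bigr => e _; rewrite /dipole /vdrop !(eq_sym v); ring. Qed.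

Lemma outflow_laplacian S phi v :
  outflow pe qe len S phi v = \sum_u phi u * laplacian S u v.
Proof.
under [RHS]eq_bigr do rewrite big_distrr.
rewrite outflowE exchange_big; apply: eq_bigr => e _ /=.
rewrite vdropE big_distrr big_distrl; apply: eq_bigr => u _ /=; ring.
Qed.

Lemma sum_mul_outflow S f phi : \sum_v f v * outflow pe qe len S phi v = energy S f phi.
Proof.
under eq_bigr do rewrite outflowE big_distrr.
rewrite exchange_big; apply: eq_bigr => e _ /=.
rewrite (vdropE f) !big_distrl; apply: eq_bigr => v _ /=; ring.
Qed.

Lemma sum_outflow S phi : \sum_v outflow pe qe len S phi v = 0.
Proof.
under eq_bigr do rewrite -[outflow _ _ _ _ _ _]mul1r.
by rewrite sum_mul_outflow /energy big1 // => e _; rewrite /vdrop subrr !mul0r.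
Qed.

Lemma outflow_eq_off S phi (rho : V -> R) z :
    \sum_v rho v = 0 -> (forall v, v != z -> outflow pe qe len S phi v = rho v) ->
  forall v, outflow pe qe len S phi v = rho v.
Proof.
move=> rho0 phi_rho v; case: (eqVneq v z) => [->|]; last exact: phi_rho.
have := sum_outflow S phi.
rewrite (bigD1 z) //= (eq_bigr rho) // => /eqP; rewrite addr_eq0 => /eqP ->.
by move/eqP: rho0; rewrite (bigD1 z) //= addr_eq0 => /eqP ->.
Qed.

Lemma energyC S f g : energy S f g = energy S g f.
Proof. by apply: eq_bigr => e _; rewrite (mulrC (vdrop f e)). Qed.

Lemma energy_ge0 S f : 0 <= energy S f f.
Proof.
apply: sumr_ge0 => e _; rewrite -expr2.
by apply: mulr_ge0; [exact: sqr_ge0 | rewrite invr_ge0 ltW].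
Qed.

Lemma energy_setD1 (S : {set E}) (e : E) (f g : V -> R) : e \in S ->
  energy S f g = energy (S :\ e) f g + vdrop f e * vdrop g e / len e.
Proof. by move=> eS; rewrite /energy (big_setD1 e eS) /= addrC. Qed.

Lemma energy_eq0_vdrop S f : energy S f f = 0 -> {in S, forall e, vdrop f e = 0}.
Proof.
move=> f0 e eS; have term_ge0 i : i \in S -> 0 <= vdrop f i * vdrop f i / len i.
  by move=> _; rewrite -expr2; apply: mulr_ge0; [exact: sqr_ge0 | rewrite invr_ge0 ltW].
have /eqP := psumr_eq0P term_ge0 f0 eS.
by rewrite -expr2 mulf_eq0 invr_eq0 (gt_eqF (len_pos e)) orbF sqrf_eq0 => /eqP.
Qed.

Lemma vdrop0_const S f : connectedS pe qe S -> {in S, forall e, vdrop f e = 0} ->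
  forall x y, f x = f y.
Proof.
move=> conn f0 x y; have /connectP [p pth ->] := conn x y.
elim: p x pth => [|w p IH] x //= /andP [/existsP [e /andP [eS exw]] pth].
rewrite -(IH w pth); apply/eqP; rewrite -subr_eq0.
have := f0 e eS; rewrite /vdrop.
by case/orP: exw => /andP [/eqP -> /eqP ->] => [-> | ]; rewrite // -oppr_eq0 opprB => ->.
Qed.

Lemma harmonic_const S phi : connectedS pe qe S ->
  (forall v, outflow pe qe len S phi v = 0) -> forall x y, phi x = phi y.
Proof.
move=> conn phi0; apply: (vdrop0_const conn); apply: energy_eq0_vdrop.
by rewrite -sum_mul_outflow big1 // => v _; rewrite phi0 mulr0.
Qed.

Lemma exists_voltage S z y :
  connectedS pe qe S -> exists phi, is_voltage pe qe len S z y phi.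
Proof.
move=> conn.
(* The Kirchhoff system with its equation at [z] replaced by the grounding condition
   [phi z = 0]; that equation is recovered afterwards by [outflow_eq_off]. *)
pose M u v := if v == z then (u == z)%:R else laplacian S u v.
have Mz phi : \sum_u phi u * M u z = phi z.
  by rewrite /M eqxx sum_mul_eq.
have Mv phi v : v != z -> \sum_u phi u * M u v = outflow pe qe len S phi v.
  by move/negbTE=> vz; rewrite outflow_laplacian /M vz.
have [|phi phi_sol] :=
  sum_kernel_surj (M := M) _ (fun v => if v == z then 0 else dipole y z v).
  move=> phi phi0.
  have outflow0 v : outflow pe qe len S phi v = 0.
    by apply: (outflow_eq_off (rho := fun=> 0) (z := z)) => [|u uz]; rewrite ?big1 // -Mv.
  by move=> u; rewrite (harmonic_const conn outflow0 u z) -Mz phi0.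
exists phi; split; first by rewrite -(Mz phi) (phi_sol z) eqxx.
apply: (outflow_eq_off (z := z) (sum_dipole y z)) => u uz.
by rewrite -Mv // phi_sol (negbTE uz).
Qed.

Lemma energy_voltage S z y phi f : is_voltage pe qe len S z y phi ->
  energy S f phi = f y - f z.
Proof.
case=> _ phi_out; rewrite -sum_mul_outflow -(sum_mul_dipole f).
by under eq_bigr do rewrite phi_out.
Qed.

Lemma voltage_reciprocity S z y1 y2 phi1 phi2 :
    is_voltage pe qe len S z y1 phi1 -> is_voltage pe qe len S z y2 phi2 ->
  phi1 y2 = phi2 y1.
Proof.
move=> V1 V2; have := energy_voltage phi1 V2; rewrite energyC (energy_voltage _ V1).
by case: V1 => -> _; case: V2 => -> _; rewrite !subr0.
Qed.

Lemma voltage_sym S z y phi psi :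
    is_voltage pe qe len S z y phi -> is_voltage pe qe len S y z psi -> phi y = psi z.
Proof.
move=> Vphi Vpsi; have := energy_voltage phi Vpsi; rewrite energyC (energy_voltage _ Vphi).
by case: Vphi => -> _; case: Vpsi => -> _; rewrite !sub0r => /oppr_inj.
Qed.

Lemma voltage_source_ge0 S z y phi : is_voltage pe qe len S z y phi -> 0 <= phi y.
Proof.
move=> Vphi; have := energy_ge0 S phi.
by rewrite (energy_voltage _ Vphi); case: Vphi => ->; rewrite subr0.
Qed.

Lemma vdrop_voltage_reciprocity S e t s b u :
    is_voltage pe qe len S (pe e) (qe e) b -> is_voltage pe qe len S t s u ->
  vdrop u e = b t - b s.
Proof.
move=> Vb Vu; rewrite -(opprB (b s)) -(energy_voltage _ Vu) energyC.
by rewrite (energy_voltage _ Vb) opprB.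
Qed.

Section Cut.
Variables (S : {set E}) (e : E) (s t : V) (a b u u' : V -> R).
Hypothesis eS : e \in S.
Hypotheses (Va : is_voltage pe qe len (S :\ e) (pe e) (qe e) a)
           (Vb : is_voltage pe qe len S (pe e) (qe e) b)
           (Vu : is_voltage pe qe len S t s u)
           (Vu' : is_voltage pe qe len (S :\ e) t s u').

Lemma cut_voltage_gap :
  (b s - b t) * (len e + a (qe e)) = len e * (a s - a t).
Proof.
have := energy_voltage a Vu; rewrite (energy_setD1 _ _ eS) energyC (energy_voltage _ Va).
rewrite -(opprB (u (pe e))) -/(vdrop u e) (vdrop_voltage_reciprocity Vb Vu).
have -> : vdrop a e = - a (qe e) by case: Va => a0 _; rewrite /vdrop a0 sub0r.
by move=> <-; field; exact: lt0r_neq0.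
Qed.

Lemma cut_resistance : u' s = u s + (a s - a t) * (b s - b t) / len e.
Proof.
have := energy_voltage u' Vu; rewrite (energy_setD1 _ _ eS) energyC (energy_voltage _ Vu').
rewrite (vdrop_voltage_reciprocity Va Vu') (vdrop_voltage_reciprocity Vb Vu).
by case: Vu => -> _; case: Vu' => -> _; rewrite !subr0 => <-; ring.
Qed.

End Cut.

Lemma jS_voltage S z y : connectedS pe qe S ->
  is_voltage pe qe len S z y (fun x => jS pe qe len S z x y).
Proof.
by move=> conn; apply: (epsilon_spec (inhabits (fun=> 0))); exact: exists_voltage.
Qed.

Lemma jS_sym S z x y :
  connectedS pe qe S -> jS pe qe len S z x y = jS pe qe len S z y x.
Proof.
by move=> conn; exact: voltage_reciprocity (jS_voltage z y conn) (jS_voltage z x conn).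
Qed.

Lemma connected_setD1 S e : ~ is_bridge pe qe S e -> connectedS pe qe (S :\ e).
Proof.
by move=> nobridge x y; apply/idPn => nxy; apply: nobridge => /(_ x y); apply/negP.
Qed.

End Network.

Lemma cutting_identities (R : realFieldType) (L Rv X Y r r' : R) :
    0 < L -> 0 <= Rv -> Y * (L + Rv) = L * X -> r' = r + X * Y / L ->
  [/\ r = r' - 1 / (L + Rv) * X ^+ 2, r = r' - (L + Rv) / L ^+ 2 * Y ^+ 2,
      r <= r' & (r' = r <-> Y = 0)].
Proof.
move=> L_gt0 Rv_ge0 gap ->.
have LRv_gt0 : 0 < L + Rv by lra.
have [L_neq0 LRv_neq0] := (lt0r_neq0 L_gt0, lt0r_neq0 LRv_gt0).
have Y_def : Y = L * X / (L + Rv) by rewrite -gap mulfK.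
have XY_X : X * Y / L = 1 / (L + Rv) * X ^+ 2.
  by rewrite Y_def; field; rewrite L_neq0 LRv_neq0.
have XY_Y : X * Y / L = (L + Rv) / L ^+ 2 * Y ^+ 2.
  by rewrite Y_def; field; rewrite L_neq0 LRv_neq0.
split.
- by rewrite XY_X addrK.
- by rewrite XY_Y addrK.
- by rewrite XY_X lerDl mulr_ge0 ?sqr_ge0 ?divr_ge0 ?ltW.
- rewrite XY_X -{2}(addr0 r); split => [/addrI/eqP | Y0].
    rewrite mulf_eq0 div1r invr_eq0 (negbTE LRv_neq0) sqrf_eq0 Y_def => /eqP ->.
    by rewrite mulr0 mul0r.
  have /eqP : L * X = 0 by rewrite -gap Y0 mul0r.
  by rewrite mulf_eq0 (negbTE L_neq0) => /eqP ->; rewrite expr0n mulr0.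
Qed.

Theorem theorem3p1 (R : realFieldType) (V E : finType)
    (pe qe : E -> V) (len : E -> R)
    (len_pos : forall e, 0 < len e)
    (Gconn : connectedS pe qe [set: E])
    (ei : E) (nobridge : ~ is_bridge pe qe [set: E] ei)
    (s t : V) :
  let G := [set: E] in
  let G' := [set: E] :\ ei in
  let r := rS pe qe len G in
  let r' := rS pe qe len G' in
  let j := jS pe qe len G in
  let j' := jS pe qe len G' in
  let Li := len ei in
  let Ri := r' (pe ei) (qe ei) in
  [/\ r s t = r' s t - 1 / (Li + Ri) * (j' (pe ei) (qe ei) s - j' (pe ei) (qe ei) t) ^+ 2,
      r s t = r' s t - (Li + Ri) / Li ^+ 2 * (j (pe ei) (qe ei) s - j (pe ei) (qe ei) t) ^+ 2,
      r s t <= r' s t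
    & (r' s t = r s t <-> j (pe ei) (qe ei) s = j (pe ei) (qe ei) t)].
Proof.
move=> G G' r r' j j' Li Ri.
have G'conn : connectedS pe qe G' := connected_setD1 nobridge.
have eiG : ei \in G by rewrite in_setT.
have Va := jS_voltage len_pos (pe ei) (qe ei) G'conn.
have Vb := jS_voltage len_pos (pe ei) (qe ei) Gconn.
have Vu := jS_voltage len_pos t s Gconn.
have Vu' := jS_voltage len_pos t s G'conn.
have -> : Ri = j' (pe ei) (qe ei) (qe ei).
  exact: voltage_sym (jS_voltage len_pos (qe ei) (pe ei) G'conn) Va.
rewrite /j /j' (jS_sym len_pos _ _ s Gconn) (jS_sym len_pos _ _ t Gconn).
rewrite (jS_sym len_pos _ _ s G'conn) (jS_sym len_pos _ _ t G'conn).
have [? ? ? eq_rr'] :=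
  cutting_identities (len_pos ei) (voltage_source_ge0 len_pos Va)
    (cut_voltage_gap len_pos eiG Va Vb Vu) (cut_resistance eiG Va Vb Vu Vu').
split=> //; apply: (iff_trans eq_rr').
by split=> [/subr0_eq | ->]; last exact: subrr.
Qed.
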